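(* Let $b_1,b_2,b_3\in\mathbb{R}$ with $b_1b_2b_3\neq 0$, and define $$\bar P^b(x)=\begin{pmatrix}0&\frac{b_1b_2}{b_3}x_3&b_1x_2\\ -\frac{b_1b_2}{b_3}x_3&0&0\\ -b_1x_2&0&0\end{pmatrix},\qquad \bar H^b(x)=-\frac{b_3}{2b_1}x_1^2+x_3,\qquad \bar C^b(x)=\frac{b_1}{2}\Big(x_2^2-\frac{b_2}{b_3}x_3^2\Big).$$ Then: (i) $(\mathbb{R}^3,\bar P^b,\bar H^b)$ is a Hamilton-Poisson realization of the system $$\dot x_1=b_1x_2,\qquad \dot x_2=b_2x_1x_3,\qquad \dot x_3=b_3x_1x_2,$$ that is, $\bar P^b$ defines a Poisson bracket $\{f,g\}_1=(\nabla f)^T\bar P^b\nabla g$ on $\mathbb{R}^3$ and the system reads $\dot x=\bar P^b(x)\nabla\bar H^b(x)$; (ii) $\bar C^b$ is a Casimir of $(\mathbb{R}^3,\{\cdot,\cdot\}_1)$, i.e. $\{\bar C^b,f\}_1=0$ for all $f\in C^\infty(\mathbb{R}^3,\mathbb{R})$. *)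

From Stdlib Require Import Reals List.
From Coquelicot Require Import Coquelicot.
Open Scope R_scope.

Definition pt := (R * R * R)%type.
Inductive ix : Type := i1 | i2 | i3.

Definition coord (i : ix) (x : pt) : R :=
  match i, x with
  | i1, (a, _, _) => a
  | i2, (_, b, _) => b
  | i3, (_, _, c) => c
  end.

Definition upd (i : ix) (t : R) (x : pt) : pt :=
  match i, x with
  | i1, (_, b, c) => (t, b, c)
  | i2, (a, _, c) => (a, t, c)
  | i3, (a, b, _) => (a, b, t)
  end.

Definition sum3 (F : ix -> R) : R := F i1 + F i2 + F i3.

Definition partial (i : ix) (f : pt -> R) (x : pt) : R :=
  Derive (fun t => f (upd i t x)) (coord i x).

Definition iter_partial (l : list ix) (f : pt -> R) : pt -> R :=
  fold_right partial f l.

Definition smooth (f : pt -> R) : Prop :=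
  forall l : list ix,
    (forall (i : ix) (x : pt),
        ex_derive (fun t => iter_partial l f (upd i t x)) (coord i x)) /\
    (forall x : pt, continuous (iter_partial l f) x).

Definition mat3 := pt -> ix -> ix -> R.

Definition bracket (P : mat3) (f g : pt -> R) : pt -> R :=
  fun x => sum3 (fun i => sum3 (fun j => partial i f x * P x i j * partial j g x)).

Definition poisson_matrix (P : mat3) : Prop :=
  (forall i j, smooth (fun x => P x i j)) /\
  (forall f g, smooth f -> smooth g -> smooth (bracket P f g)) /\
  (forall f g h (a c : R), smooth f -> smooth g -> smooth h -> forall x,
      bracket P (fun y => a * f y + c * g y) h x
      = a * bracket P f h x + c * bracket P g h x) /\
  (forall f g, smooth f -> smooth g -> forall x,
      bracket P f g x = - bracket P g f x) /\
  (forall f g h, smooth f -> smooth g -> smooth h -> forall x,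
      bracket P (fun y => f y * g y) h x
      = f x * bracket P g h x + g x * bracket P f h x) /\
  (forall f g h, smooth f -> smooth g -> smooth h -> forall x,
      bracket P f (bracket P g h) x + bracket P g (bracket P h f) x
      + bracket P h (bracket P f g) x = 0).

Definition hamilton_poisson_realization (P : mat3) (H : pt -> R)
    (X : pt -> ix -> R) : Prop :=
  poisson_matrix P /\ smooth H /\
  forall x i, X x i = sum3 (fun j => P x i j * partial j H x).

Definition casimir (P : mat3) (C : pt -> R) : Prop :=
  smooth C /\
  forall f, smooth f -> forall x, bracket P C f x = 0.

Definition Pbar (b1 b2 b3 : R) : mat3 := fun x i j =>
  let x2 := coord i2 x in let x3 := coord i3 x in
  match i, j with
  | i1, i2 => b1 * b2 / b3 * x3
  | i1, i3 => b1 * x2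
  | i2, i1 => - (b1 * b2 / b3 * x3)
  | i3, i1 => - (b1 * x2)
  | _, _ => 0
  end.

Definition Hbar (b1 b2 b3 : R) (x : pt) : R :=
  - (b3 / (2 * b1)) * (coord i1 x) ^ 2 + coord i3 x.

Definition Cbar (b1 b2 b3 : R) (x : pt) : R :=
  b1 / 2 * ((coord i2 x) ^ 2 - b2 / b3 * (coord i3 x) ^ 2).

Definition Xsys (b1 b2 b3 : R) (x : pt) (i : ix) : R :=
  let x1 := coord i1 x in let x2 := coord i2 x in let x3 := coord i3 x in
  match i with
  | i1 => b1 * x2
  | i2 => b2 * x1 * x3
  | i3 => b3 * x1 * x2
  end.

From Stdlib Require Import Reals List Lra FunctionalExtensionality.
From Coquelicot Require Import Coquelicot.
Open Scope R_scope.

(* Everything is reduced to calculus along coordinate lines.  Smoothness is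
   closed under sums and products because, by induction on the order of
   derivation, the partial derivatives of a sum or product are again sums of
   products of smooth functions; mixed partials commute by Schwarz's theorem on
   two-dimensional slices.  Hence for any matrix with smooth entries the bracket
   is smooth, bilinear and Leibniz, and skew when the matrix is.  Since the
   entries of Pbar are linear in x, the Jacobi identity for Pbar becomes a
   polynomial identity in the first and second partials of f, g, h once mixed
   partials are identified.  Finally grad Hbar and grad Cbar are explicit:
   Pbar grad Hbar is the vector field and grad Cbar lies in the kernel of Pbar. *)

Lemma coord_upd_same i t x : coord i (upd i t x) = t.
Proof. destruct i, x as [[a b] c]; reflexivity. Qed.

Lemma upd_coord i x : upd i (coord i x) x = x.
Proof. destruct i, x as [[a b] c]; reflexivity. Qed.

Lemma upd_upd_same i s t x : upd i s (upd i t x) = upd i s x.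
Proof. destruct i, x as [[a b] c]; reflexivity. Qed.

Lemma upd_upd_comm i j s t x : i <> j -> upd i s (upd j t x) = upd j t (upd i s x).
Proof. destruct i, j, x as [[a b] c]; simpl; congruence. Qed.

Lemma continuous_pair {U V W : UniformSpace} (f : U -> V) (g : U -> W) x :
  continuous f x -> continuous g x -> continuous (fun z => (f z, g z)) x.
Proof.
  intros Hf Hg. apply (continuous_comp_2 f g pair); auto.
  apply (continuous_ext (fun p => p)); [now intros [] | apply continuous_id].
Qed.

Lemma continuous_upd2 i j x (z : R * R) :
  continuous (fun z : R * R => upd i (fst z) (upd j (snd z) x)) z.
Proof.
  destruct z as [u v], i, j, x as [[a b] c]; simpl;
    repeat first [ apply continuous_pair | apply continuous_fst
                 | apply continuous_snd | apply continuous_const ].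
Qed.

Definition regular (F : pt -> R) : Prop :=
  (forall i x, ex_derive (fun t => F (upd i t x)) (coord i x)) /\
  (forall x, continuous F x).

Lemma regular_ex_derive F i t x : regular F -> ex_derive (fun s => F (upd i s x)) t.
Proof.
  intros [HF _]. specialize (HF i (upd i t x)).
  rewrite coord_upd_same in HF.
  apply (ex_derive_ext _ _ _ (fun s => f_equal F (upd_upd_same i s t x)) HF).
Qed.

Lemma Derive_upd F i t x : Derive (fun s => F (upd i s x)) t = partial i F (upd i t x).
Proof.
  unfold partial. rewrite coord_upd_same.
  apply Derive_ext. intro s. now rewrite upd_upd_same.
Qed.

Lemma regular_const c : regular (fun _ => c).
Proof. split; intros; [apply ex_derive_const | apply continuous_const]. Qed.

Lemma regular_coord j : regular (coord j).
Proof.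
  split.
  - intros i [[a b] c]. destruct i, j; simpl;
      first [exact (ex_derive_id _) | apply ex_derive_const].
  - intros [[a b] c]. destruct j.
    + apply (continuous_ext (fun y : pt => fst (fst y))); [now intros [[]]|].
      apply (continuous_comp fst fst); [apply continuous_fst | apply continuous_fst].
    + apply (continuous_ext (fun y : pt => snd (fst y))); [now intros [[]]|].
      apply (continuous_comp fst snd); [apply continuous_fst | apply continuous_snd].
    + apply (continuous_ext (fun y : pt => snd y)); [now intros [[]]|].
      apply continuous_snd.
Qed.

Lemma regular_plus f g : regular f -> regular g -> regular (fun y => f y + g y).
Proof.
  intros [Df Cf] [Dg Cg]. split; intros.
  - exact (ex_derive_plus _ _ _ (Df _ _) (Dg _ _)).
  - exact (continuous_plus (V := R_NormedModule) _ _ _ (Cf x) (Cg x)).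
Qed.

Lemma regular_mult f g : regular f -> regular g -> regular (fun y => f y * g y).
Proof.
  intros [Df Cf] [Dg Cg]. split; intros.
  - exact (ex_derive_mult _ _ _ (Df _ _) (Dg _ _)).
  - exact (continuous_mult (K := R_AbsRing) _ _ _ (Cf x) (Cg x)).
Qed.

Lemma partial_const i c x : partial i (fun _ => c) x = 0.
Proof. unfold partial. apply Derive_const. Qed.

Lemma partial_coord i j : exists c, partial i (coord j) = fun _ => c.
Proof.
  destruct i, j; [exists 1|exists 0|exists 0|exists 0|exists 1|exists 0|exists 0|exists 0|exists 1];
    apply functional_extensionality; intros [[a b] c]; unfold partial; simpl;
    first [exact (Derive_id _) | apply Derive_const].
Qed.

Lemma partial_plus i f g x : regular f -> regular g ->
  partial i (fun y => f y + g y) x = partial i f x + partial i g x.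
Proof.
  intros [Df _] [Dg _].
  exact (Derive_plus (fun t => f (upd i t x)) (fun t => g (upd i t x)) _ (Df i x) (Dg i x)).
Qed.

Lemma partial_mult i f g x : regular f -> regular g ->
  partial i (fun y => f y * g y) x = partial i f x * g x + f x * partial i g x.
Proof.
  intros [Df _] [Dg _]. unfold partial.
  rewrite (Derive_mult (fun t => f (upd i t x)) (fun t => g (upd i t x)) _ (Df i x) (Dg i x)).
  now rewrite upd_coord.
Qed.

Lemma partial_scal i c f x : partial i (fun y => c * f y) x = c * partial i f x.
Proof. unfold partial. apply Derive_scal. Qed.

Lemma smooth_regular F : smooth F -> regular F.
Proof. intro H. exact (H nil). Qed.

Lemma iter_partial_snoc l i F : iter_partial (l ++ i :: nil) F = iter_partial l (partial i F).
Proof. unfold iter_partial. now rewrite fold_right_app. Qed.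

Lemma smooth_partial i F : smooth F -> smooth (partial i F).
Proof. intros H l. rewrite <- iter_partial_snoc. apply H. Qed.

Fixpoint smooth_upto (n : nat) (F : pt -> R) : Prop :=
  match n with
  | O => regular F
  | S m => regular F /\ forall i, smooth_upto m (partial i F)
  end.

Lemma smooth_upto_regular n F : smooth_upto n F -> regular F.
Proof. destruct n; [auto | now intros []]. Qed.

Lemma smooth_iff_upto F : smooth F <-> forall n, smooth_upto n F.
Proof.
  split.
  - intros HF n. revert F HF. induction n as [|n IH]; intros F HF.
    + exact (smooth_regular F HF).
    + split; [exact (smooth_regular F HF) | intro i; apply IH, smooth_partial, HF].
  - intros HF l. change (regular (iter_partial l F)). revert F HF.
    induction l as [|i l IH] using rev_ind; intros F HF.
    + exact (HF O).
    + rewrite iter_partial_snoc. apply IH. intro n. exact (proj2 (HF (S n)) i).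
Qed.

Lemma smooth_upto_plus n f g : smooth_upto n f -> smooth_upto n g ->
  smooth_upto n (fun y => f y + g y).
Proof.
  revert f g. induction n as [|n IH]; intros f g Hf Hg.
  - now apply regular_plus.
  - pose proof (smooth_upto_regular _ _ Hf) as Rf.
    pose proof (smooth_upto_regular _ _ Hg) as Rg.
    split; [now apply regular_plus|]. intro i.
    replace (partial i (fun y => f y + g y)) with (fun y => partial i f y + partial i g y).
    + apply IH; [apply Hf | apply Hg].
    + apply functional_extensionality. intro x. now rewrite partial_plus.
Qed.

Lemma smooth_plus f g : smooth f -> smooth g -> smooth (fun y => f y + g y).
Proof.
  rewrite !smooth_iff_upto. intros Hf Hg n. now apply smooth_upto_plus.
Qed.

Lemma smooth_upto_mult n f g : smooth f -> smooth g -> smooth_upto n (fun y => f y * g y).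
Proof.
  revert f g. induction n as [|n IH]; intros f g Hf Hg.
  - apply regular_mult; now apply smooth_regular.
  - split; [apply regular_mult; now apply smooth_regular|]. intro i.
    replace (partial i (fun y => f y * g y))
      with (fun y => partial i f y * g y + f y * partial i g y).
    + apply smooth_upto_plus; apply IH; auto using smooth_partial.
    + apply functional_extensionality. intro x.
      rewrite partial_mult; auto using smooth_regular.
Qed.

Lemma smooth_mult f g : smooth f -> smooth g -> smooth (fun y => f y * g y).
Proof. intros Hf Hg. apply smooth_iff_upto. intro n. now apply smooth_upto_mult. Qed.

Lemma smooth_const c : smooth (fun _ => c).
Proof.
  apply smooth_iff_upto. intro n. revert c. induction n as [|n IH]; intro c.
  - apply regular_const.
  - split; [apply regular_const|]. intro i.
    replace (partial i (fun _ => c)) with (fun _ : pt => 0); [apply IH|].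
    apply functional_extensionality. intro x. now rewrite partial_const.
Qed.

Lemma smooth_coord j : smooth (coord j).
Proof.
  apply smooth_iff_upto. intros [|n]; [apply regular_coord|].
  split; [apply regular_coord|]. intro i.
  destruct (partial_coord i j) as [c ->]. apply smooth_iff_upto, smooth_const.
Qed.

Lemma smooth_opp f : smooth f -> smooth (fun y => - f y).
Proof.
  intro Hf. replace (fun y => - f y) with (fun y => -1 * f y).
  - apply smooth_mult; [apply smooth_const | exact Hf].
  - apply functional_extensionality. intro y. ring.
Qed.

Lemma smooth_minus f g : smooth f -> smooth g -> smooth (fun y => f y - g y).
Proof. intros Hf Hg. apply (smooth_plus f (fun y => - g y)); auto using smooth_opp. Qed.

Lemma smooth_pow f n : smooth f -> smooth (fun y => f y ^ n).
Proof.
  intro Hf. induction n as [|n IH]; [exact (smooth_const 1)|].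
  change (smooth (fun y => f y * f y ^ n)). now apply smooth_mult.
Qed.

Lemma smooth_sum3 (F : ix -> pt -> R) : (forall k, smooth (F k)) ->
  smooth (fun y => sum3 (fun k => F k y)).
Proof. intro HF. unfold sum3. auto using smooth_plus. Qed.

Ltac solve_smooth :=
  repeat match goal with
  | H : smooth ?f |- smooth ?f => exact H
  | H : smooth ?f |- smooth (fun y => ?f y) => exact H
  | H : forall i j, smooth (fun x => ?Q x i j) |- smooth (fun y => ?Q y _ _) => apply H
  | |- smooth (fun _ => ?c) => apply (smooth_const c)
  | |- smooth (coord _) => apply smooth_coord
  | |- smooth (fun y => coord ?j y) => apply (smooth_coord j)
  | |- smooth (partial _ _) => apply smooth_partial
  | |- smooth (fun y => _ + _) => apply smooth_plus
  | |- smooth (fun y => _ - _) => apply smooth_minus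
  | |- smooth (fun y => - _) => apply smooth_opp
  | |- smooth (fun y => _ * _) => apply smooth_mult
  | |- smooth (fun y => _ ^ _) => apply smooth_pow
  | |- smooth (fun y => sum3 _) => apply smooth_sum3; intro
  end.

Lemma ix_eq_dec (i j : ix) : {i = j} + {i <> j}.
Proof. decide equality. Qed.

Lemma partial_comm i j f x : smooth f ->
  partial i (partial j f) x = partial j (partial i f) x.
Proof.
  intro Hf. destruct (ix_eq_dec i j) as [<-|Hij]; [reflexivity|].
  set (y u v := upd i u (upd j v x)).
  pose (F u v := f (y u v)).
  assert (Hy : forall u v, y u v = upd j v (upd i u x)) by (intros; now apply upd_upd_comm).
  assert (Di : forall u v, Derive (fun s => F s v) u = partial i f (y u v)).
  { intros u v. apply Derive_upd. }
  assert (Dj : forall u v, Derive (fun t => F u t) v = partial j f (y u v)).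
  { intros u v. unfold F. rewrite (Derive_ext _ _ _ (fun t => f_equal f (Hy u t))).
    now rewrite Derive_upd, Hy. }
  assert (Dij : forall u v, Derive (fun z => Derive (fun t => F z t) v) u
                            = partial i (partial j f) (y u v)).
  { intros u v. rewrite (Derive_ext _ _ _ (fun z => Dj z v)). apply Derive_upd. }
  assert (Dji : forall u v, Derive (fun z => Derive (fun t => F t z) u) v
                            = partial j (partial i f) (y u v)).
  { intros u v. rewrite (Derive_ext _ _ _ (fun z => Di u z)).
    rewrite (Derive_ext _ _ _ (fun z => f_equal (partial i f) (Hy u z))).
    now rewrite Derive_upd, Hy. }
  assert (Hcont : forall l, continuity_2d_pt
            (fun u v => iter_partial l f (y u v)) (coord i x) (coord j x)).
  { intro l. apply continuity_2d_pt_filterlim.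
    apply (continuous_comp (fun z : R * R => y (fst z) (snd z))).
    - apply continuous_upd2.
    - exact (proj2 (Hf l) _). }
  assert (Hyx : y (coord i x) (coord j x) = x) by (unfold y; now rewrite !upd_coord).
  rewrite <- Hyx at 1 2.
  rewrite <- Dij, <- Dji. apply Schwarz.
  - exists (mkposreal _ Rlt_0_1). intros u v _ _.
    assert (Rf := smooth_regular _ Hf).
    repeat split.
    + apply regular_ex_derive, Rf.
    + apply (ex_derive_ext _ _ _ (fun t => eq_sym (f_equal f (Hy u t)))).
      apply regular_ex_derive, Rf.
    + apply (ex_derive_ext _ _ _ (fun z => eq_sym (Dj z v))).
      apply regular_ex_derive, smooth_regular, smooth_partial, Hf.
    + apply (ex_derive_ext _ _ _ (fun z => eq_sym (Di u z))).
      apply (ex_derive_ext _ _ _ (fun z => eq_sym (f_equal (partial i f) (Hy u z)))).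
      apply regular_ex_derive, smooth_regular, smooth_partial, Hf.
  - apply (continuity_2d_pt_ext _ _ _ _ (fun u v => eq_sym (Dij u v))), (Hcont (i :: j :: nil)).
  - apply (continuity_2d_pt_ext _ _ _ _ (fun u v => eq_sym (Dji u v))), (Hcont (j :: i :: nil)).
Qed.

Section Bracket.

Variable P : mat3.

Lemma bracket_linear f g h a c x : smooth f -> smooth g ->
  bracket P (fun y => a * f y + c * g y) h x = a * bracket P f h x + c * bracket P g h x.
Proof.
  intros Hf Hg. unfold bracket, sum3.
  rewrite !partial_plus, !partial_scal by (apply smooth_regular; solve_smooth).
  ring.
Qed.

Lemma bracket_leibniz f g h x : smooth f -> smooth g ->
  bracket P (fun y => f y * g y) h x = f x * bracket P g h x + g x * bracket P f h x.
Proof.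
  intros Hf Hg. unfold bracket, sum3.
  rewrite !partial_mult by (apply smooth_regular; solve_smooth).
  ring.
Qed.

Lemma bracket_skew f g x : (forall y i j, P y j i = - P y i j) ->
  bracket P f g x = - bracket P g f x.
Proof.
  intro HP. unfold bracket, sum3.
  assert (Hdiag : forall i, P x i i = 0) by (intro i; specialize (HP x i i); lra).
  rewrite !Hdiag, (HP x i1 i2), (HP x i1 i3), (HP x i2 i3).
  ring.
Qed.

Hypothesis smooth_P : forall i j, smooth (fun x => P x i j).

Lemma smooth_bracket f g : smooth f -> smooth g -> smooth (bracket P f g).
Proof. intros Hf Hg. unfold bracket. solve_smooth. Qed.

Lemma partial_bracket f g k x : smooth f -> smooth g ->
  partial k (bracket P f g) x = sum3 (fun i => sum3 (fun j =>
      partial k (partial i f) x * P x i j * partial j g x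
    + partial i f x * partial k (fun y => P y i j) x * partial j g x
    + partial i f x * P x i j * partial k (partial j g) x)).
Proof.
  intros Hf Hg. unfold bracket, sum3.
  rewrite !partial_plus, !partial_mult by (apply smooth_regular; solve_smooth).
  ring.
Qed.

End Bracket.

Section Pbar.

Variables b1 b2 b3 : R.

Lemma smooth_Pbar i j : smooth (fun x => Pbar b1 b2 b3 x i j).
Proof. destruct i, j; cbn [Pbar]; solve_smooth. Qed.

Lemma Pbar_skew x i j : Pbar b1 b2 b3 x j i = - Pbar b1 b2 b3 x i j.
Proof. destruct i, j; cbn [Pbar]; ring. Qed.

(* The entries of [Pbar] are linear in [x]. *)
Lemma partial_Pbar k i j x :
  partial k (fun y => Pbar b1 b2 b3 y i j) x = Pbar b1 b2 b3 (upd k 1 (0, 0, 0)) i j.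
Proof.
  destruct k, i, j, x as [[a b] c]; unfold partial; cbn;
    apply is_derive_unique; auto_derive; trivial; ring.
Qed.

Lemma jacobi_Pbar f g h x : smooth f -> smooth g -> smooth h ->
  bracket (Pbar b1 b2 b3) f (bracket (Pbar b1 b2 b3) g h) x
  + bracket (Pbar b1 b2 b3) g (bracket (Pbar b1 b2 b3) h f) x
  + bracket (Pbar b1 b2 b3) h (bracket (Pbar b1 b2 b3) f g) x = 0.
Proof.
  intros Hf Hg Hh.
  unfold bracket at 1 3 5, sum3.
  rewrite !partial_bracket by (assumption || exact smooth_Pbar).
  unfold sum3. rewrite !partial_Pbar. cbn [Pbar upd coord].
  rewrite ?(partial_comm i2 i1 f), ?(partial_comm i3 i1 f), ?(partial_comm i3 i2 f),
    ?(partial_comm i2 i1 g), ?(partial_comm i3 i1 g), ?(partial_comm i3 i2 g),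
    ?(partial_comm i2 i1 h), ?(partial_comm i3 i1 h), ?(partial_comm i3 i2 h) by assumption.
  ring.
Qed.

Lemma poisson_matrix_Pbar : poisson_matrix (Pbar b1 b2 b3).
Proof.
  split; [|split; [|split; [|split; [|split]]]]; intros.
  - apply smooth_Pbar.
  - now apply (smooth_bracket _ smooth_Pbar).
  - now apply bracket_linear.
  - apply bracket_skew, Pbar_skew.
  - now apply bracket_leibniz.
  - now apply jacobi_Pbar.
Qed.

Lemma smooth_Hbar : smooth (Hbar b1 b2 b3).
Proof. unfold Hbar. solve_smooth. Qed.

Lemma smooth_Cbar : smooth (Cbar b1 b2 b3).
Proof. unfold Cbar. solve_smooth. Qed.

Lemma partial_Hbar j x : partial j (Hbar b1 b2 b3) x =
  match j with i1 => - (b3 / (2 * b1)) * (2 * coord i1 x) | i2 => 0 | i3 => 1 end.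
Proof.
  destruct j, x as [[a b] c]; unfold partial, Hbar; cbn;
    apply is_derive_unique; auto_derive; trivial; ring.
Qed.

Lemma partial_Cbar j x : partial j (Cbar b1 b2 b3) x =
  match j with i1 => 0 | i2 => b1 * coord i2 x | i3 => - b1 * (b2 / b3) * coord i3 x end.
Proof.
  destruct j, x as [[a b] c]; unfold partial, Cbar; cbn;
    apply is_derive_unique; auto_derive; trivial; set (k := b2 / b3); field.
Qed.

Lemma Xsys_hamiltonian x i : b1 <> 0 -> b3 <> 0 ->
  Xsys b1 b2 b3 x i = sum3 (fun j => Pbar b1 b2 b3 x i j * partial j (Hbar b1 b2 b3) x).
Proof.
  intros. unfold sum3. rewrite !partial_Hbar.
  destruct i; cbn [Pbar Xsys]; field; auto.
Qed.

Lemma casimir_Cbar : casimir (Pbar b1 b2 b3) (Cbar b1 b2 b3).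
Proof.
  split; [exact smooth_Cbar|]. intros f _ x.
  unfold bracket, sum3. rewrite !partial_Cbar. cbn [Pbar].
  unfold Rdiv. ring.
Qed.

End Pbar.

Theorem proposition3p3 (b1 b2 b3 : R) (hb : b1 * b2 * b3 <> 0) :
  hamilton_poisson_realization (Pbar b1 b2 b3) (Hbar b1 b2 b3) (Xsys b1 b2 b3) /\
  casimir (Pbar b1 b2 b3) (Cbar b1 b2 b3).
Proof.
  assert (b1 <> 0) by (intro E; apply hb; rewrite E; ring).
  assert (b3 <> 0) by (intro E; apply hb; rewrite E; ring).
  split; [split; [|split] | ].
  - apply poisson_matrix_Pbar.
  - apply smooth_Hbar.
  - intros x i. now apply Xsys_hamiltonian.
  - apply casimir_Cbar.
Qed.
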